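(* Let $\mathcal R$ be a reaction network and $\mathcal U=\mathcal U_1\cup\mathcal U_2\subseteq\mathcal S$ with $\mathcal U_1\cap\mathcal U_2=\emptyset$. Suppose $\mathcal U_1$ is eliminable in $\mathcal R$ with respect to $\mathcal F_1\subseteq\mathcal R_{\mathcal U_1}$, $\mathcal U_2$ is eliminable in $\mathcal R$ with respect to $\mathcal F_2\subseteq\mathcal R_{\mathcal U_2}$, and $(\mathcal R_{\mathcal U_1}\cup\mathcal R_{\mathcal U_1}')\cap(\mathcal R_{\mathcal U_2}\cup\mathcal R_{\mathcal U_2}')=\emptyset$. Then $\mathcal U$ is eliminable in $\mathcal R$ with respect to $\mathcal F=\mathcal F_1\cup\mathcal F_2$.
   Context: Species $S_1,\dots,S_n$ are the unit vectors of $\mathbb{N}_0^n$ and $\mathcal S=\{S_1,\dots,S_n\}$; for $x\in\mathbb{N}_0^n$, $\mathrm{supp}(x)=\{S_k: x^k>0\}$. A reaction network (RN) is a (possibly infinite) subset $\mathcal R\subseteq\mathbb{N}_0^n\times\mathbb{N}_0^n$ containing no $(y,y')$ with $y=y'$; elements $(y,y')$ are reactions $y\to y'$ with reactant $y$ and product $y'$. For $r_1=(y_1,y_1'),\ r_2=(y_2,y_2')$ define $r_1\oplus r_2=(y_1+0\vee(y_2-y_1'),\ y_2'+0\vee(y_1'-y_2))$ ($\vee$ componentwise maximum); it is associative. $\mathrm{cl}(A)$ is the set of all finite $\oplus$-sums of elements of $A$, including $(0,0)$. For $\mathcal U\subseteq\mathcal S$ and a set $B\subseteq\mathbb{N}_0^n\times\mathbb{N}_0^n$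 write $B_{\mathcal U}=\{(y,y')\in B:\mathrm{supp}(y)\cap\mathcal U\neq\emptyset\}$ and $B_{\mathcal U}'=\{(y,y')\in B:\mathrm{supp}(y')\cap\mathcal U\neq\emptyset\}$. Set $\overline{\mathcal R}=\mathrm{cl}(\mathcal R)$ and $\overline{\mathcal R}_0=\overline{\mathcal R}\setminus(\overline{\mathcal R}_{\mathcal U}\cup\overline{\mathcal R}_{\mathcal U}')$ (for the relevant $\mathcal U$). A set $\mathcal U\subseteq\mathcal S$ is eliminable in $\mathcal R$ with respect to $\mathcal F\subseteq\mathcal R_{\mathcal U}$ if for every $r_0\in\mathcal R_{\mathcal U}'$ and every $r_1\in\mathrm{cl}(\mathcal F)$ with $r_0\oplus r_1\notin\overline{\mathcal R}_{\mathcal U}$ there exists $r_2\in\mathrm{cl}(\mathcal F)$ with $r_0\oplus r_1\oplus r_2\in\overline{\mathcal R}_0$. *)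

From mathcomp Require Import all_boot.
Set Implicit Arguments. Unset Strict Implicit. Unset Printing Implicit Defensive.

(* Complexes: elements of N_0^n, represented as finite functions 'I_n -> nat.
   Species S_k correspond to indices k : 'I_n; a set of species is a {set 'I_n}. *)
Definition cplx (n : nat) := {ffun 'I_n -> nat}.
Definition reaction (n : nat) := (cplx n * cplx n)%type.

(* A (possibly infinite) set of reactions, as a Prop-valued predicate. *)
Definition rset (n : nat) := reaction n -> Prop.

Definition is_RN (n : nat) (R : rset n) : Prop :=
  forall y y' : cplx n, R (y, y') -> y <> y'.

Definition zero_reaction (n : nat) : reaction n := ([ffun=> 0%N], [ffun=> 0%N]).

(* r1 (+) r2 = (y1 + 0 v (y2 - y1'), y2' + 0 v (y1' - y2)); on nat, 0 v (a - b)
   is the truncated subtraction a - b. *)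
Definition oplus (n : nat) (r1 r2 : reaction n) : reaction n :=
  ([ffun k => (r1.1 k + (r2.1 k - r1.2 k))%N],
   [ffun k => (r2.2 k + (r1.2 k - r2.1 k))%N]).

Definition cl (n : nat) (A : rset n) : rset n :=
  fun r => exists s : seq (reaction n),
      (forall x, x \in s -> A x) /\ r = foldr (@oplus n) (zero_reaction n) s.

Definition meets (n : nat) (y : cplx n) (U : {set 'I_n}) : Prop :=
  exists2 k, k \in U & (0 < y k)%N.

Definition sub_U (n : nat) (B : rset n) (U : {set 'I_n}) : rset n :=
  fun r => B r /\ meets r.1 U.
Definition sub_U' (n : nat) (B : rset n) (U : {set 'I_n}) : rset n :=
  fun r => B r /\ meets r.2 U.

Definition Rbar0 (n : nat) (R : rset n) (U : {set 'I_n}) : rset n :=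
  fun r => cl R r /\ ~ sub_U (cl R) U r /\ ~ sub_U' (cl R) U r.

Definition eliminable (n : nat) (R : rset n) (U : {set 'I_n}) (F : rset n) : Prop :=
  (forall r, F r -> sub_U R U r) /\
  forall r0, sub_U' R U r0 ->
  forall r1, cl F r1 ->
    ~ sub_U (cl R) U (oplus r0 r1) ->
    exists r2, cl F r2 /\ Rbar0 R U (oplus (oplus r0 r1) r2).

From mathcomp Require Import all_boot.

Set Implicit Arguments.
Unset Strict Implicit.
Unset Printing Implicit Defensive.

(* Call a reaction "silent at k" if species k occurs neither in
   its reactant nor in its product.  The separation hypothesis says that every
   reaction of R touching U1 is silent on U2 and vice versa.  Silence at k is
   preserved by (+), hence by closures, and (+)-prepending a prefix silent at
   k keeps a positive k-coefficient of a reactant.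
   By symmetry take r0 in R'_U with product meeting U1, and r1 in cl(F1 u F2),
   r1 = f_1 (+) ... (+) f_m.  If some f_i lies in F2, the first such one has a
   reactant meeting U2, and all terms before it (r0 and elements of F1) are
   silent on U2; so r0 (+) r1 has a reactant meeting U2, i.e. lies in
   \overline{R}_U, excluded.  Thus r1 is in cl(F1) and r0 (+) r1 is not in
   \overline{R}_{U1}; eliminability of U1 gives r2 in cl(F1) with
   r0 (+) r1 (+) r2 in \overline{R}_0 for U1, and since every summand is
   silent on U2, this sum is in \overline{R}_0 for U1 u U2 as well. *)

Section Silence.

Variable n : nat.
Implicit Types (r x : reaction n) (s : seq (reaction n)) (A B : rset n).

Definition silent_at (k : 'I_n) r := r.1 k = 0 /\ r.2 k = 0.

Lemma silent_oplus k r1 r2 :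
  silent_at k r1 -> silent_at k r2 -> silent_at k (oplus r1 r2).
Proof. by move=> [a1 a2] [b1 b2]; rewrite /silent_at /= !ffunE a1 a2 b1 b2. Qed.

Lemma silent_foldr k s :
  (forall x, x \in s -> silent_at k x) ->
  silent_at k (foldr (@oplus n) (zero_reaction n) s).
Proof.
elim: s => [|y s IH] Hs /=; first by rewrite /silent_at /= !ffunE.
apply: silent_oplus; first by apply: Hs; rewrite mem_head.
by apply: IH => x xs; apply: Hs; rewrite inE xs orbT.
Qed.

Lemma silent_cl k A r :
  (forall x, A x -> silent_at k x) -> cl A r -> silent_at k r.
Proof. by move=> HA [s [Hs ->]]; apply: silent_foldr => x /Hs /HA. Qed.

Lemma reactant_pos_after_silent k pre x post :
  (forall y, y \in pre -> silent_at k y) -> 0 < x.1 k ->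
  0 < (foldr (@oplus n) (zero_reaction n) (pre ++ x :: post)).1 k.
Proof.
elim: pre => [|y pre IH] Hpre Hx /=.
  by rewrite ffunE (leq_trans Hx) ?leq_addr.
have [y1 y2] : silent_at k y by apply: Hpre; rewrite mem_head.
rewrite ffunE y1 y2 add0n subn0; apply: IH => // z zs.
by apply: Hpre; rewrite inE zs orbT.
Qed.

Lemma silent_not_meets (U : {set 'I_n}) r :
  (forall k, k \in U -> silent_at k r) -> ~ meets r.1 U /\ ~ meets r.2 U.
Proof.
by move=> Hs; split=> -[k kU]; case: (Hs k kU) => r1k r2k; rewrite ?r1k ?r2k.
Qed.

Lemma meets_setU (y : cplx n) (U1 U2 : {set 'I_n}) :
  meets y (U1 :|: U2) <-> meets y U1 \/ meets y U2.
Proof.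
split=> [[k] | [] [k kU yk]]; last 2 first.
- by exists k; rewrite ?inE ?kU ?orbT.
- by exists k; rewrite ?inE ?kU ?orbT.
by rewrite inE => /orP [] kU yk; [left | right]; exists k.
Qed.

Lemma cl_mono A B r : (forall x, A x -> B x) -> cl A r -> cl B r.
Proof. by move=> AB [s [Hs ->]]; exists s; split => // x /Hs /AB. Qed.

Lemma cl_or_comm A B r : cl (fun x => A x \/ B x) r -> cl (fun x => B x \/ A x) r.
Proof. by apply: cl_mono => x [] ?; [right | left]. Qed.

Lemma first_in_second A B s :
  (forall x, x \in s -> A x \/ B x) ->
  (forall x, x \in s -> A x) \/
  exists pre x post,
    [/\ s = pre ++ x :: post, forall y, y \in pre -> A y & B x].
Proof.
elim: s => [|y s IH] Hs; first by left.
have {}IH := IH (fun x xs => Hs x (@mem_behead _ (y :: s) x xs)).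
case: (Hs y (mem_head y s)) => [Ay | By]; last by right; exists [::], y, s.
case: IH => [HA | [pre [x [post [-> Hpre Bx]]]]].
  by left => x; rewrite inE => /orP [/eqP -> | /HA].
right; exists (y :: pre), x, post; split => // z.
by rewrite inE => /orP [/eqP -> | /Hpre].
Qed.

End Silence.

Section OneSidedElimination.

Variables (n : nat) (R : rset n) (U1 U2 : {set 'I_n}) (F1 F2 : rset n).

Hypothesis elim1 : eliminable R U1 F1.
Hypothesis F2_sub : forall r, F2 r -> sub_U R U2 r.
Hypothesis touch1_silent2 :
  forall r, (sub_U R U1 r \/ sub_U' R U1 r) -> forall k, k \in U2 -> silent_at k r.

Let F := fun r : reaction n => F1 r \/ F2 r.

(* Elements of F1 react from U1, hence are silent on U2. *)
Lemma F1_silent2 r (k : 'I_n) : F1 r -> k \in U2 -> silent_at k r.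
Proof. by move=> /(proj1 elim1) H1; apply: touch1_silent2; left. Qed.

Lemma eliminable_union_from_U1 r0 r1 :
  sub_U' R U1 r0 -> cl F r1 -> ~ sub_U (cl R) (U1 :|: U2) (oplus r0 r1) ->
  exists r2, cl F r2 /\ Rbar0 R (U1 :|: U2) (oplus (oplus r0 r1) r2).
Proof.
move=> Hr0 [s [Hs Er1]] Hn.
have r0_silent k : k \in U2 -> silent_at k r0 by apply: touch1_silent2; right.
have clR : cl R (oplus r0 r1).
  exists (r0 :: s); rewrite Er1; split => // x; rewrite inE => /orP [/eqP -> | /Hs].
    by case: Hr0.
  by case=> [/(proj1 elim1) | /F2_sub] [].
have all_F1 : forall x, x \in s -> F1 x.
  have [// | [pre [x [post [Es Hpre F2x]]]]] := first_in_second Hs.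
  exfalso; apply: Hn; split=> //; apply/meets_setU; right.
  have [_ [k kU xk]] := F2_sub F2x; exists k => //.
  rewrite Er1 Es -[oplus _ _]/(foldr _ _ ((r0 :: pre) ++ x :: post)).
  apply: reactant_pos_after_silent => // y.
  by rewrite inE => /orP [/eqP -> | /Hpre /F1_silent2]; [apply: r0_silent | apply].
have cl1 : cl F1 r1 by exists s.
have Hn1 : ~ sub_U (cl R) U1 (oplus r0 r1).
  by case=> _ m1; apply: Hn; split=> //; apply/meets_setU; left.
have [r2 [cl2 [clR2 [N1 N1']]]] := (proj2 elim1) r0 Hr0 r1 cl1 Hn1.
exists r2; split; first by apply: cl_mono cl2 => x; left.
have [N2 N2'] : ~ meets (oplus (oplus r0 r1) r2).1 U2 /\
                ~ meets (oplus (oplus r0 r1) r2).2 U2.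
  apply: silent_not_meets => k kU.
  apply: silent_oplus; first apply: silent_oplus.
  - exact: r0_silent.
  - by apply: (silent_cl (A := F1)) cl1 => x /F1_silent2; apply.
  - by apply: (silent_cl (A := F1)) cl2 => x /F1_silent2; apply.
split=> //; split.
  by case=> _ /meets_setU [m | m]; [apply: N1 | apply: N2].
by case=> _ /meets_setU [m | m]; [apply: N1' | apply: N2'].
Qed.

End OneSidedElimination.

Lemma separation_silent (n : nat) (R : rset n) (V W : {set 'I_n}) :
  (forall r, (sub_U R V r \/ sub_U' R V r) -> ~ (sub_U R W r \/ sub_U' R W r)) ->
  forall r, (sub_U R V r \/ sub_U' R V r) -> forall k, k \in W -> silent_at k r.
Proof.
move=> Hsep r Hr k kW; have Rr : R r by case: Hr => -[].
have zero (c : nat) : ~ 0 < c -> c = 0 by move=> /negP; rewrite lt0n negbK => /eqP.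
by split; apply: zero => ck; apply: (Hsep r Hr); [left | right]; split=> //; exists k.
Qed.

Theorem proposition4p6 (n : nat) (R : rset n) (U1 U2 : {set 'I_n})
  (F1 F2 : rset n) :
  is_RN R ->
  [disjoint U1 & U2] ->
  eliminable R U1 F1 ->
  eliminable R U2 F2 ->
  (forall r, (sub_U R U1 r \/ sub_U' R U1 r) ->
             ~ (sub_U R U2 r \/ sub_U' R U2 r)) ->
  eliminable R (U1 :|: U2) (fun r => F1 r \/ F2 r).
Proof.
move=> _ _ elim1 elim2 Hsep.
have sep12 := separation_silent Hsep.
have sep21 : forall r, (sub_U R U2 r \/ sub_U' R U2 r) ->
    forall k, k \in U1 -> silent_at k r.
  by apply: separation_silent => r H2 H1; apply: (Hsep r H1 H2).
split.
  by move=> r [/(proj1 elim1) | /(proj1 elim2)] [Rr m]; split=> //;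
     apply/meets_setU; [left | right].
move=> r0 [R0 /meets_setU [m1 | m2]] r1 cl1 Hn.
  exact: (eliminable_union_from_U1 elim1 (proj1 elim2) sep12).
rewrite setUC in Hn *.
have [r2 [cl2 H]] :=
  eliminable_union_from_U1 elim2 (proj1 elim1) sep21 (conj R0 m2) (cl_or_comm cl1) Hn.
by exists r2; split=> //; apply: cl_or_comm.
Qed.
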